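(* Let $d$ be a positive integer and let $\mu,\nu,\rho$ be $d$-partitions with $\mu\prec\rho\succ\nu$. Then there exist a unique $d$-partition $\kappa$ and a unique nonnegative integer $m$ such that the cell with entry $m$ and bottom-left, top-left, bottom-right, top-right corners $\kappa,\mu,\nu,\rho$ satisfies the $d$-RSK local rule.
   Context: Partitions: finite weakly decreasing sequences of positive integers, $\lambda_i=0$ for $i>\ell(\lambda)$; $d$-partitions have $\ell\le d$; $\alpha\prec\beta$ (also $\beta\succ\alpha$) means $\beta_1\ge\alpha_1\ge\beta_2\ge\alpha_2\ge\cdots$. The $d$-RSK local rule for a cell with entry $m$ and corners $\kappa$ (bottom-left), $\mu$ (top-left), $\nu$ (bottom-right), $\rho$ (top-right) requires: all four are $d$-partitions, $\mu\succ\kappa\prec\nu$, $\mu\prec\rho\succ\nu$, $m=0$ or $\kappa_d=0$, $\rho_1+\kappa_d=m+\min(\mu_d,\nu_d)+\max(\mu_1,\nu_1)$, and $\rho_i+\kappa_{i-1}=\min(\mu_{i-1},\nu_{i-1})+\max(\mu_i,\nu_i)$ for $2\le i\le d$. *)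

From mathcomp Require Import all_boot.
Set Implicit Arguments. Unset Strict Implicit. Unset Printing Implicit Defensive.

(* Parts are indexed from 1: part l i = l_i,
   with l_i = 0 for i > size l (and, by convention, for i = 0). *)
Definition is_partition (l : seq nat) : bool :=
  all (fun x => 0 < x) l && sorted geq l.

Definition part (l : seq nat) (i : nat) : nat := nth 0 l i.-1.

Definition dpartition (d : nat) (l : seq nat) : bool :=
  is_partition l && (size l <= d).

Definition interlace (a b : seq nat) : Prop :=
  forall i, 1 <= i -> part a i <= part b i /\ part b i.+1 <= part a i.

Definition local_rule (d : nat) (m : nat) (kappa mu nu rho : seq nat) : Prop :=
  [&& dpartition d kappa, dpartition d mu, dpartition d nu & dpartition d rho] /\
  (interlace kappa mu /\ interlace kappa nu) /\
  (interlace mu rho /\ interlace nu rho) /\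
  (m = 0 \/ part kappa d = 0) /\
  part rho 1 + part kappa d
    = m + minn (part mu d) (part nu d) + maxn (part mu 1) (part nu 1) /\
  (forall i, 2 <= i <= d ->
    part rho i + part kappa i.-1
      = minn (part mu i.-1) (part nu i.-1) + maxn (part mu i) (part nu i)).

(* The equations of the local rule can be solved for kappa from right to left:
   for 2 <= i <= d they force
     kappa_(i-1) = min(mu_(i-1), nu_(i-1)) + max(mu_i, nu_i) - rho_i,
   and the first one forces kappa_d - m = S - rho_1 with
   S = min(mu_d, nu_d) + max(mu_1, nu_1); together with "m = 0 or kappa_d = 0"
   this gives kappa_d = (S - rho_1)^+ and m = (rho_1 - S)^+.  The interlacings
   mu < rho > nu make every such kappa_i lie between max(mu_(i+1), nu_(i+1))
   and min(mu_i, nu_i), so these values do define a d-partition interlacing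
   mu and nu, and the cell satisfies the rule. *)

From mathcomp Require Import all_boot.
From mathcomp Require Import zify.

Set Implicit Arguments.
Unset Strict Implicit.
Unset Printing Implicit Defensive.

Lemma part_default (l : seq nat) (d : nat) :
  size l <= d -> forall i, d < i -> part l i = 0.
Proof. by move=> size_l i lt_di; rewrite /part nth_default //; lia. Qed.
Arguments part_default {l d}.

Lemma dpartition_size (d : nat) (l : seq nat) : dpartition d l -> size l <= d.
Proof. by case/andP. Qed.

Lemma dpartition_partition (d : nat) (l : seq nat) :
  dpartition d l -> is_partition l.
Proof. by case/andP. Qed.

Lemma eq_partition (l1 l2 : seq nat) : is_partition l1 -> is_partition l2 ->
  (forall i, 0 < i -> part l1 i = part l2 i) -> l1 = l2.
Proof.
move=> /andP[/allP pos1 _] /andP[/allP pos2 _] eq_part.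
have eq_nth j : nth 0 l1 j = nth 0 l2 j by exact: (eq_part j.+1).
have eq_size : size l1 = size l2.
  case: (ltngtP (size l1) (size l2)) => // lt_size.
    by have := pos2 _ (mem_nth 0 lt_size); rewrite -eq_nth nth_default.
  by have := pos1 _ (mem_nth 0 lt_size); rewrite eq_nth nth_default.
exact: (eq_from_nth eq_size).
Qed.

Lemma dpartition_of_parts (d : nat) (f : nat -> nat) :
  (forall i, 0 < i -> f i.+1 <= f i) -> (forall i, d < i -> f i = 0) ->
  exists l, dpartition d l /\ forall i, 0 < i -> part l i = f i.
Proof.
elim: d f => [|d IH] f f_nonincr f_vanish.
  by exists [::]; split=> [//|i i_gt0]; rewrite f_vanish // /part nth_nil.
have [f1_0 | f1_neq0] := eqVneq (f 1) 0.
  exists [::]; split=> // i i_gt0; rewrite /part nth_nil.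
  elim: i i_gt0 => [// | [_ _ | i IHi _]]; first by rewrite f1_0.
  by have := f_nonincr i.+1 isT; rewrite -IHi //; lia.
have [l [dpart_l part_l]] :=
  IH (fun i => f i.+1) (fun i _ => f_nonincr i.+1 isT) (fun i lt_di => f_vanish i.+1 lt_di).
exists (f 1 :: l); split; last by case=> [|[|i]] //= _; rewrite -(part_l i.+1).
move: dpart_l; rewrite /dpartition /is_partition /= => /andP[/andP[pos_l sorted_l] size_l].
rewrite lt0n f1_neq0 pos_l ltnS size_l andbT /=.
case: l part_l sorted_l {pos_l size_l} => [// | x l] part_l /= ->.
by rewrite andbT -[x]/(part (x :: l) 1) part_l ?f_nonincr.
Qed.

Section LocalRule.

Variables (d : nat) (mu nu rho : seq nat).
Hypotheses (size_mu : size mu <= d) (size_nu : size nu <= d).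
Hypotheses (mu_rho : interlace mu rho) (nu_rho : interlace nu rho).

Definition rule_shift : nat :=
  minn (part mu d) (part nu d) + maxn (part mu 1) (part nu 1).

Definition rule_entry : nat := part rho 1 - rule_shift.

Definition rule_kappa (i : nat) : nat :=
  if i < d then
    minn (part mu i) (part nu i) + maxn (part mu i.+1) (part nu i.+1) - part rho i.+1
  else if i == d then rule_shift - part rho 1 else 0.

Lemma rule_kappa_bounds (i : nat) : 0 < i ->
  maxn (part mu i.+1) (part nu i.+1) <= rule_kappa i <= minn (part mu i) (part nu i).
Proof.
move=> i_gt0; rewrite /rule_kappa /rule_shift.
case: (ltngtP i d) => [lt_id | lt_di | ->].
- have [] := mu_rho i_gt0; have [] := nu_rho i_gt0.
  have [] := mu_rho (ltn0Sn i); have [] := nu_rho (ltn0Sn i); lia.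
- rewrite !(part_default size_mu i) ?(part_default size_nu i) //.
  rewrite !(part_default size_mu i.+1) ?(part_default size_nu i.+1); lia.
- rewrite !(part_default size_mu d.+1) ?(part_default size_nu d.+1) //.
  have [] := mu_rho (ltn0Sn 0); have [] := nu_rho (ltn0Sn 0); lia.
Qed.

Lemma rule_kappa_nonincr (i : nat) : 0 < i -> rule_kappa i.+1 <= rule_kappa i.
Proof.
move=> i_gt0; have := rule_kappa_bounds i_gt0; have := rule_kappa_bounds (ltn0Sn i).
lia.
Qed.

Lemma rule_kappa_vanish (i : nat) : d < i -> rule_kappa i = 0.
Proof. by move=> lt_di; rewrite /rule_kappa ltnNge (ltnW lt_di) gtn_eqF. Qed.

Lemma local_rule_parts (m : nat) (kappa : seq nat) :
  local_rule d m kappa mu nu rho ->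
  m = rule_entry /\ forall i, 0 < i -> part kappa i = rule_kappa i.
Proof.
move=> [/and4P[dpart_kappa _ _ _] [_ [_ [m_or_kappa [eq_first eq_rest]]]]].
have kappa_d : part kappa d = rule_shift - part rho 1 by rewrite /rule_shift; lia.
split; first by rewrite /rule_entry /rule_shift; lia.
move=> i i_gt0; case: (ltngtP i d) => [lt_id | lt_di | ->].
- have := eq_rest i.+1 ltac:(lia); rewrite /rule_kappa lt_id /=.
  have [] := mu_rho i_gt0; have [] := nu_rho i_gt0; lia.
- by rewrite rule_kappa_vanish // (part_default (dpartition_size dpart_kappa)).
- by rewrite kappa_d /rule_kappa ltnn eqxx.
Qed.

Lemma local_rule_of_parts (kappa : seq nat) : 0 < d ->
  [&& dpartition d kappa, dpartition d mu, dpartition d nu & dpartition d rho] ->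
  (forall i, 0 < i -> part kappa i = rule_kappa i) ->
  local_rule d rule_entry kappa mu nu rho.
Proof.
move=> d_gt0 dparts part_kappa; split=> //.
have kappa_d : part kappa d = rule_shift - part rho 1
  by rewrite part_kappa // /rule_kappa ltnn eqxx.
split.
  by split=> i i_gt0; rewrite !part_kappa //;
    have := rule_kappa_bounds i_gt0; have := rule_kappa_bounds (ltn0Sn i); lia.
split; first by [].
do 2 (split; first by rewrite kappa_d /rule_entry /rule_shift; lia).
move=> i /andP[le2i leid]; have i1_gt0 : 0 < i.-1 by lia.
rewrite part_kappa // /rule_kappa ifT; last by lia.
have [] := mu_rho i1_gt0; have [] := nu_rho i1_gt0.
by rewrite prednK; lia.
Qed.

End LocalRule.

Theorem lemma6p2 (d : nat) (mu nu rho : seq nat) :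
  0 < d ->
  dpartition d mu -> dpartition d nu -> dpartition d rho ->
  interlace mu rho -> interlace nu rho ->
  exists kappa : seq nat, exists m : nat,
    local_rule d m kappa mu nu rho /\
    (forall (kappa' : seq nat) (m' : nat),
        local_rule d m' kappa' mu nu rho -> kappa' = kappa /\ m' = m).
Proof.
move=> d_gt0 dpart_mu dpart_nu dpart_rho mu_rho nu_rho.
have size_mu := dpartition_size dpart_mu; have size_nu := dpartition_size dpart_nu.
have [kappa [dpart_kappa part_kappa]] := dpartition_of_parts
  (rule_kappa_nonincr size_mu size_nu mu_rho nu_rho) (@rule_kappa_vanish d mu nu rho).
exists kappa, (rule_entry d mu nu rho); split.
  by apply: local_rule_of_parts => //; rewrite dpart_kappa dpart_mu dpart_nu dpart_rho.
move=> kappa' m' rule'.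
have [-> part_kappa'] := local_rule_parts size_mu size_nu mu_rho nu_rho rule'.
have dpart_kappa' : dpartition d kappa' by case: rule' => /and4P[].
split=> //; apply: (eq_partition (dpartition_partition dpart_kappa'))
  (dpartition_partition dpart_kappa) _ => i i_gt0.
by rewrite part_kappa ?part_kappa'.
Qed.
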